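(* (i) Suppose the first Piola–Kirchhoff stress of a Cauchy elastic solid is given by $P^{aA}=g^{ab}\sum_{i=1}^3\phi_i\,\partial\psi_i/\partial F^b{}_A$ with scalar functions $\phi_i,\psi_i$ of $(X,\mathbf F,\mathbf G,\mathbf g)$ (some of which may be identically zero or constant). If the response is objective, i.e. all $\phi_i$ and $\psi_i$ depend on $\mathbf F$ only through $\mathbf C^\flat=\mathbf F^\star\mathbf g\mathbf F$, then the balance of angular momentum $P^{aA}F^b{}_A=P^{bA}F^a{}_A$ holds for every $\mathbf F$. (ii) The converse fails: there exist Cauchy elastic response functions (e.g. Ericksen solids $P^{aA}=g^{ab}\phi_1(\mathbf F,\mathbf G,\mathbf g)\partial\psi_1/\partial F^b{}_A$ with $\psi_1$ a function of $(\mathbf C^\flat,\mathbf G)$ and $\phi_1$ a nonvanishing function of $\mathbf F$ that is not invariant under $\mathbf F\mapsto\mathbf Q\mathbf F$ for $\mathbf g$-orthogonal $\mathbf Q$) that satisfy the balance of angular momentum for every $\mathbf F$ but are not objective, i.e. $\hat{\mathbf P}(\mathbf Q\mathbf F)\neq\mathbf Q\hat{\mathbf P}(\mathbf F)$ for some $\mathbf g$-orthogonal $\mathbf Q$.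
   Context: Setting: a body $(\mathcal B,\mathbf G)$ deforming in Euclidean space $(\mathcal S,\mathbf g)$ with deformation gradient $\mathbf F$ (components $F^a{}_A$), dual $\mathbf F^\star$, right Cauchy–Green tensor $\mathbf C^\flat=\mathbf F^\star\mathbf g\mathbf F$. A Cauchy elastic solid has constitutive law $\mathbf P=\hat{\mathbf P}(X,\mathbf F,\mathbf G,\mathbf g)$ for the first Piola–Kirchhoff stress, with no energy function assumed. Objectivity means $\hat{\mathbf P}(X,\mathbf Q\mathbf F,\mathbf G,\mathbf g)=\mathbf Q\hat{\mathbf P}(X,\mathbf F,\mathbf G,\mathbf g)$ for all $\mathbf g$-orthogonal $\mathbf Q$. Balance of angular momentum means $\mathbf P\mathbf F^\star=\mathbf F\mathbf P^\star$, i.e. $P^{aA}F^b{}_A=P^{bA}F^a{}_A$. *)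

(* Index conventions: F : 'M_3 with F b A = F^b_A (row = spatial index,
   column = material index); g : 'M_3 with g a b = g_{ab} (covariant spatial
   metric), so g^{ab} = invmx g. *)
From HB Require Import structures.
From mathcomp Require Import all_boot all_order all_algebra.
From mathcomp Require Import all_classical all_reals all_analysis.
Set Implicit Arguments. Unset Strict Implicit. Unset Printing Implicit Defensive.
Import Order.TTheory GRing.Theory Num.Theory.
Import numFieldNormedType.Exports.
Local Open Scope ring_scope.

Definition is_metric (R : realType) (g : 'M[R]_3) : Prop :=
  g^T = g /\ forall v : 'rV[R]_3, v != 0 -> 0 < (v *m g *m v^T) 0 0.

Definition g_orthogonal (R : realType) (g Q : 'M[R]_3) : Prop :=
  Q^T *m g *m Q = g.

Definition rCG (R : realType) (g F : 'M[R]_3) : 'M[R]_3 := F^T *m g *m F.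

Definition dF (R : realType) (psi : 'M[R]_3 -> R) (F : 'M[R]_3) : 'M[R]_3 :=
  \matrix_(b < 3, A < 3) ('D_(delta_mx b A) psi F : R).

Definition PK (R : realType) (g : 'M[R]_3) (phi psi : 'I_3 -> 'M[R]_3 -> R)
  (F : 'M[R]_3) : 'M[R]_3 :=
  invmx g *m \sum_(i < 3) (phi i F *: dF (psi i) F).

Definition balance_ang_mom (R : realType) (P : 'M[R]_3 -> 'M[R]_3) : Prop :=
  forall F : 'M[R]_3, P F *m F^T = (P F *m F^T)^T.

Definition objective (R : realType) (g : 'M[R]_3) (P : 'M[R]_3 -> 'M[R]_3) : Prop :=
  forall Q F : 'M[R]_3, g_orthogonal g Q -> P (Q *m F) = Q *m P F.

Definition through_C (R : realType) (g : 'M[R]_3) (f : 'M[R]_3 -> R) : Prop :=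
  exists f' : 'M[R]_3 -> R, forall F, f F = f' (rCG g F).

(* (i) A scalar psi that depends on F only through C = F^T g F is invariant
   under F |-> Q F for every g-orthogonal Q.  The product of the g-reflections
   in v and in v + t u is such a Q for every t, equal to 1 at t = 0, with
   velocity (2 / g(v,v)) (v u^T - u v^T) g there; differentiating psi along
   this curve shows that d psi(F) kills (v u^T - u v^T) g F.  With v, u the
   basis vectors e_a, e_b this says that S = g F (d psi / d F)^T is symmetric,
   and P F^T = g^-1 S^T g^-1 is then symmetric for every linear combination of
   such responses.
   (ii) Take psi = C_00 and phi = 1 if F_00 > 0, 2 otherwise.  As psi is even its gradient is odd, so objectivity for Q = -1 at
   F = 1 would give (phi(-1) - phi(1)) d psi / d F (1) = 0; but Euler's
   identity d psi(1) 1 = 2 psi(1) = 2 g_00 > 0 shows the gradient is nonzero. *)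

From HB Require Import structures.
From mathcomp Require Import all_boot all_order all_algebra.
From mathcomp Require Import all_classical all_reals all_analysis.
From mathcomp Require Import ring.
Set Implicit Arguments.
Unset Strict Implicit.
Unset Printing Implicit Defensive.
Import Order.TTheory GRing.Theory Num.Theory.
Import numFieldNormedType.Exports.
Local Open Scope ring_scope.

Section GReflection.
Variables (R : fieldType) (n : nat) (g : 'M[R]_n).
Hypothesis g_sym : g^T = g.

Definition gdot (u v : 'cV[R]_n) : R := (u^T *m g *m v) 0 0.

Definition reflection (w : 'cV[R]_n) : 'M[R]_n :=
  1%:M - (2 / gdot w w) *: (w *m w^T *m g).

Lemma gdotC u v : gdot u v = gdot v u.
Proof. by rewrite /gdot -[LHS]trace_mx11 -mxtrace_tr !trmx_mul trmxK g_sym mulmxA trace_mx11. Qed.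

Lemma mul_reflection w m (X : 'M[R]_(n, m)) :
  reflection w *m X = X - (2 / gdot w w) *: (w *m (w^T *m g *m X)).
Proof. by rewrite mulmxBl mul1mx -scalemxAl !mulmxA. Qed.

Lemma reflection_vec w u : reflection w *m u = u - (2 / gdot w w * gdot w u) *: w.
Proof. by rewrite mul_reflection [w^T *m g *m u]mx11_scalar mul_mx_scalar scalerA. Qed.

Lemma reflectionN w : gdot w w != 0 -> reflection w *m w = - w.
Proof.
move=> nz; rewrite reflection_vec mulfVK // scaler_nat mulr2n.
by rewrite opprD addrA subrr sub0r.
Qed.

Lemma reflection_orth w u : gdot w u = 0 -> reflection w *m u = u.
Proof. by move=> wu; rewrite reflection_vec wu mulr0 scale0r subr0. Qed.

Lemma trmx_reflection_mul w : (reflection w)^T *m g = g *m reflection w.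
Proof.
rewrite /reflection linearB /= linearZ /= trmx1 !trmx_mul trmxK g_sym.
by rewrite mulmxBl mulmxBr mul1mx mulmx1 -scalemxAl -scalemxAr !mulmxA.
Qed.

Lemma reflectionK w : gdot w w != 0 -> reflection w *m reflection w = 1%:M.
Proof.
move=> nz; have wgR : w^T *m g *m reflection w = - (w^T *m g).
  by rewrite -mulmxA -trmx_reflection_mul mulmxA -trmx_mul reflectionN // linearN /= mulNmx.
by rewrite mul_reflection wgR mulmxN scalerN opprK /reflection !mulmxA subrK.
Qed.

Lemma reflection_g_orthogonal w : (reflection w)^T *m g *m reflection w = g.
Proof.
(* for g-isotropic w, 2 / 0 = 0 makes reflection w the identity *)
have [w0|nz] := eqVneq (gdot w w) 0.
  by rewrite /reflection w0 invr0 mulr0 scale0r subr0 trmx1 mul1mx mulmx1.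
by rewrite trmx_reflection_mul -mulmxA reflectionK // mulmx1.
Qed.

Lemma g_orthogonal_mul (Q1 Q2 : 'M[R]_n) :
  Q1^T *m g *m Q1 = g -> Q2^T *m g *m Q2 = g -> (Q1 *m Q2)^T *m g *m (Q1 *m Q2) = g.
Proof.
by move=> h1 h2; rewrite trmx_mul !mulmxA -(mulmxA Q2^T) -(mulmxA _ _ Q1) h1.
Qed.

Lemma trmx_line (v u : 'cV[R]_n) t : (v + t *: u)^T = v^T + t *: u^T.
Proof. by apply/matrixP => i j; rewrite !mxE. Qed.

Lemma gdot_line v u t : gdot v u = 0 ->
  gdot (v + t *: u) (v + t *: u) = gdot v v + t ^+ 2 * gdot u u.
Proof.
move=> vu; have uv : gdot u v = 0 by rewrite gdotC.
move: vu uv; rewrite /gdot trmx_line !mulmxDl !mulmxDr -!scalemxAl -!scalemxAr.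
move: (v^T *m g *m v) (v^T *m g *m u) (u^T *m g *m v) (u^T *m g *m u) => a b c d.
by rewrite !mxE => -> ->; ring.
Qed.

Lemma reflection_curveE v u t m (F : 'M[R]_(n, m)) :
  gdot v v != 0 -> gdot v u = 0 ->
  reflection v *m reflection (v + t *: u) *m F =
  reflection v *m F - (2 / gdot (v + t *: u) (v + t *: u)) *:
    (- (v *m v^T *m g *m F) + t *: ((u *m v^T - v *m u^T) *m g *m F)
     + t ^+ 2 *: (u *m u^T *m g *m F)).
Proof.
move=> vv vu; rewrite -mulmxA [reflection (v + _) *m F]mul_reflection mulmxBr.
rewrite -scalemxAr !mulmxA.
have -> : reflection v *m (v + t *: u) = - v + t *: u.
  by rewrite mulmxDr -scalemxAr reflectionN // reflection_orth.
congr (_ - _ *: _); rewrite trmx_line.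
rewrite !(mulmxDl, mulmxBl, mulNmx, mulmxDr, mulmxBr, mulmxN) -!scalemxAr -!scalemxAl.
move: (v *m v^T *m g *m F) (v *m u^T *m g *m F) (u *m v^T *m g *m F) (u *m u^T *m g *m F).
by move=> A B C D; apply/matrixP => i j; rewrite !mxE; ring.
Qed.

Lemma skew_sub_scaled (v u : 'cV[R]_n) c :
  v *m (u - c *: v)^T - (u - c *: v) *m v^T = v *m u^T - u *m v^T.
Proof.
rewrite [(u - _)^T]raddfB /= [(_ *: v)^T]linearZ /= mulmxBr mulmxBl -scalemxAr -scalemxAl.
by rewrite opprB addrA subrK.
Qed.

Lemma gdot_orthogonalize v u :
  gdot v v != 0 -> gdot v (u - (gdot v u / gdot v v) *: v) = 0.
Proof.
rewrite /gdot mulmxBr -scalemxAr.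
by move: (v^T *m g *m u) (v^T *m g *m v) => a b b0; rewrite !mxE divfK // subrr.
Qed.

Lemma gdot_delta i j : gdot (delta_mx i 0) (delta_mx j 0) = g i j.
Proof. by rewrite /gdot trmx_delta -rowE -colE !mxE. Qed.
End GReflection.

Lemma mxtrace_delta_mul (R : pzRingType) n (i j : 'I_n) (A : 'M[R]_n) :
  \tr (delta_mx i j *m A) = A j i.
Proof.
rewrite /mxtrace (bigD1 i) //= big1 ?addr0 => [|k /negbTE ki]; rewrite mxE.
  rewrite (bigD1 j) //= big1 ?addr0 => [|l /negbTE lj]; rewrite mxE eqxx ?lj.
    by rewrite eqxx mul1r.
  by rewrite mul0r.
by rewrite big1 // => l _; rewrite mxE ki mul0r.
Qed.

Section CurveCalculus.
Variables (R : realType) (V : normedModType R).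

Lemma is_deriveZl (k : R -> R) (B : V) (x dk : R) :
  is_derive x 1 k dk -> is_derive x 1 (fun t => k t *: B) (dk *: B).
Proof.
move=> [dk1 <-]; have dk' : differentiable k x by apply/derivable1_diffP.
have dkB : differentiable (fun t => k t *: B) x by apply: differentiableZl.
apply: DeriveDef; first exact/derivable1_diffP.
by rewrite !deriveE // diffZl.
Qed.

Lemma is_derive_scaled_quadratic (k : R -> R) (B0 B1 B2 : V) :
  is_derive (0 : R) 1 k 0 ->
  is_derive (0 : R) 1 (fun t => k t *: (B0 + t *: B1 + t ^+ 2 *: B2)) (k 0 *: B1).
Proof.
move=> dk.
have dk1 : is_derive (0 : R) 1 (k * id) (k 0).
  by apply: is_derive_eq; rewrite scaler1 scaler0 addr0.
have dk2 : is_derive (0 : R) 1 (k * id ^+ 2) 0.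
  by apply: is_derive_eq; rewrite scaler0 addr0 expr1 mulr0 scale0r scaler0.
have -> : (fun t => k t *: (B0 + t *: B1 + t ^+ 2 *: B2)) =
    (fun t => k t *: B0) + (fun t => (k * id) t *: B1) + (fun t => (k * id ^+ 2) t *: B2).
  by apply/funext => t; rewrite !fctE !scalerDr !scalerA.
have := is_deriveD (is_deriveD (is_deriveZl B0 dk) (is_deriveZl B1 dk1))
  (is_deriveZl B2 dk2).
by rewrite !scale0r add0r addr0.
Qed.

Lemma derive1_comp_diff (W : normedModType R) (psi : V -> W) (c : R -> V) (x : R) (dc : V) :
  differentiable psi (c x) -> is_derive x 1 c dc ->
  'D_1 (psi \o c) x = 'd psi (c x) dc.
Proof.
move=> dpsi [dc1 <-]; have dc' : differentiable c x by apply/derivable1_diffP.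
have dpc : differentiable (psi \o c) x by apply: differentiable_comp.
by rewrite (deriveE _ dpc) (deriveE _ dc') (diff_comp dc' dpsi).
Qed.

Lemma diff_level_curve (W : normedModType R) (psi : V -> W) (c : R -> V) (x : R) (dc : V) :
  differentiable psi (c x) -> is_derive x 1 c dc ->
  (forall t, psi (c t) = psi (c x)) -> 'd psi (c x) dc = 0.
Proof.
move=> dpsi cdc hc; rewrite -(derive1_comp_diff dpsi cdc).
have -> : psi \o c = cst (psi (c x)) by apply/funext => t; exact: hc.
exact: derive_cst.
Qed.

Lemma diff_homogeneous (psi : V -> R) (F : V) (m : nat) :
  differentiable psi F -> (forall t : R, psi (t *: F) = t ^+ m * psi F) ->
  'd psi F F = m%:R * psi F.
Proof.
move=> dpsi hom.
have dray : is_derive (1 : R) 1 (fun t : R => t *: F) (1 *: F).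
  by apply: is_deriveZl.
have dpsi' : differentiable psi ((fun t : R => t *: F) 1) by rewrite /= scale1r.
rewrite -[in LHS](scale1r F) -(derive1_comp_diff dpsi' dray).
have -> : psi \o (fun t : R => t *: F) = (fun t => t ^+ m * psi F).
  by apply/funext => t; exact: hom.
rewrite deriveMr; last exact: exprn_derivable.
by rewrite exp_derive expr1n !scaler1 mulrC.
Qed.

Lemma derive_even (W : normedModType R) (f : V -> W) (x v : V) :
  (forall y, f (- y) = f y) -> 'D_v f (- x) = 'D_(- v) f x.
Proof.
move=> f_even; rewrite /derive; do 2 f_equal; apply/funext => h /=.
by rewrite -[f (h *: v + - x)]f_even opprD opprK scalerN f_even.
Qed.
End CurveCalculus.

Section ReflectionCurve.
Variables (R : realType) (n : nat) (g : 'M[R]_n).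
Hypothesis g_sym : g^T = g.

Lemma is_derive_reflection_curve v u m (F : 'M[R]_(n, m)) :
  gdot g v v != 0 -> gdot g v u = 0 ->
  is_derive (0 : R) 1 (fun t => reflection g v *m reflection g (v + t *: u) *m F)
    ((2 / gdot g v v) *: ((v *m u^T - u *m v^T) *m g *m F)).
Proof.
move=> vv vu.
pose q : {poly R} := (gdot g v v)%:P + 'X^2 * (gdot g u u)%:P.
pose k t := 2 / gdot g (v + t *: u) (v + t *: u).
have qE t : gdot g (v + t *: u) (v + t *: u) = q.[t].
  by rewrite gdot_line // /q !hornerE.
have q0 : q.[0] = gdot g v v by rewrite -qE scale0r addr0.
have dq : is_derive (0 : R) 1 (horner q) 0.
  by have := is_derive_poly q 0; rewrite /q !poly.derivE !hornerE.
have dqinv : is_derive (0 : R) 1 (fun t => (q.[t])^-1) 0.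
  apply: DeriveDef; first by apply: derivableV; [rewrite q0 | exact: ex_derive].
  by rewrite deriveV ?q0 // derive_val scaler0.
have dk : is_derive (0 : R) 1 k 0.
  have -> : k = 2 *: (fun t => (q.[t])^-1) by apply/funext => t; rewrite /k qE.
  by have := is_deriveZ 2 dqinv; rewrite scaler0.
have -> : (fun t => reflection g v *m reflection g (v + t *: u) *m F) =
    cst (reflection g v *m F) - (fun t => k t *: (- (v *m v^T *m g *m F)
      + t *: ((u *m v^T - v *m u^T) *m g *m F) + t ^+ 2 *: (u *m u^T *m g *m F))).
  by apply/funext => t; rewrite reflection_curveE.
have := is_deriveB (is_derive_cst (reflection g v *m F) (0 : R) 1)
  (is_derive_scaled_quadratic (- (v *m v^T *m g *m F)) ((u *m v^T - v *m u^T) *m g *m F)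
    (u *m u^T *m g *m F) dk).
have skewN : - ((u *m v^T - v *m u^T) *m g *m F) = (v *m u^T - u *m v^T) *m g *m F.
  by rewrite -[LHS]mulNmx -mulNmx opprB.
by rewrite sub0r -scalerN skewN /k scale0r addr0.
Qed.

Lemma g_invariant_diff_skew m (psi : 'M[R]_(n, m) -> R) F v u :
  differentiable psi F -> (forall Q, Q^T *m g *m Q = g -> psi (Q *m F) = psi F) ->
  gdot g v v != 0 -> 'd psi F ((v *m u^T - u *m v^T) *m g *m F) = 0.
Proof.
move=> dpsi psi_inv vv; wlog vu : u / gdot g v u = 0.
  move=> orth_case; rewrite -(skew_sub_scaled v u (gdot g v u / gdot g v v)).
  exact/orth_case/gdot_orthogonalize.
have c0 : reflection g v *m reflection g (v + 0 *: u) *m F = F.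
  by rewrite scale0r addr0 reflectionK // mul1mx.
have c_level t : psi (reflection g v *m reflection g (v + t *: u) *m F) =
    psi (reflection g v *m reflection g (v + 0 *: u) *m F).
  by rewrite c0 psi_inv // g_orthogonal_mul // reflection_g_orthogonal.
have := diff_level_curve _ (is_derive_reflection_curve F vv vu) c_level.
rewrite c0 linearZ /= => /(_ dpsi) /eqP; rewrite scaler_eq0 mulf_eq0 invr_eq0.
by rewrite (negbTE vv) pnatr_eq0 /= => /eqP.
Qed.
End ReflectionCurve.

Section CauchyElastic.
Variables (R : realType) (g : 'M[R]_3).
Hypothesis g_metric : is_metric g.

Lemma metric_sym : g^T = g.
Proof. by case: g_metric. Qed.

Lemma metric_diag_gt0 a : 0 < g a a.
Proof.
have [_ gpos] := g_metric; have ea0 : (delta_mx 0 a : 'rV[R]_3) != 0.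
  by apply/eqP => /matrixP/(_ 0 a); rewrite !mxE !eqxx /= => /eqP; rewrite oner_eq0.
by have := gpos _ ea0; rewrite trmx_delta -rowE -colE !mxE.
Qed.

Lemma metric_unitmx : g \in unitmx.
Proof.
have [_ gpos] := g_metric; rewrite unitmxE unitfE; apply/negP => /det0P [v v0 vg].
by have := gpos v v0; rewrite vg mul0mx mxE ltxx.
Qed.

Lemma diff_dF (psi : 'M[R]_3 -> R) F K :
  differentiable psi F -> 'd psi F K = \tr (K *m (dF psi F)^T).
Proof.
move=> dpsi; rewrite [in LHS](matrix_sum_delta K) [in RHS](matrix_sum_delta K).
rewrite linear_sum mulmx_suml linear_sum.
apply: eq_bigr => i _; rewrite linear_sum mulmx_suml linear_sum; apply: eq_bigr => j _.
by rewrite !linearZ /= -scalemxAl mxtraceZ mxtrace_delta_mul mxE -deriveE // mxE.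
Qed.

Lemma g_invariant_dF_sym (psi : 'M[R]_3 -> R) F :
  differentiable psi F -> (forall Q, g_orthogonal g Q -> psi (Q *m F) = psi F) ->
  (g *m F *m (dF psi F)^T)^T = g *m F *m (dF psi F)^T.
Proof.
move=> dpsi psi_inv; apply/matrixP => a b; rewrite mxE; apply/eqP; rewrite -subr_eq0.
have gaa : gdot g (delta_mx a 0) (delta_mx a 0) != 0.
  by rewrite gdot_delta gt_eqF ?metric_diag_gt0.
have := g_invariant_diff_skew metric_sym (delta_mx b 0) dpsi psi_inv gaa.
rewrite !trmx_delta !mul_delta_mx diff_dF // -!mulmxA mulmxBl [\tr _]linearB /=.
by rewrite !mxtrace_delta_mul !mulmxA => ->.
Qed.

Lemma balance_of_sym (N : 'M[R]_3 -> 'M[R]_3) :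
  (forall F, (g *m F *m (N F)^T)^T = g *m F *m (N F)^T) ->
  balance_ang_mom (fun F => invmx g *m N F).
Proof.
move=> symN F; have symS := symN F; set S := g *m F *m (N F)^T in symS *.
have NF : N F *m F^T = S *m invmx g.
  by rewrite -symS !trmx_mul trmxK metric_sym !mulmxA mulmxK // metric_unitmx.
by clearbody S; rewrite -mulmxA NF !trmx_mul trmx_inv metric_sym symS mulmxA.
Qed.

Lemma rCG_g_orthogonal Q F : g_orthogonal g Q -> rCG g (Q *m F) = rCG g F.
Proof.
by move=> gQ; rewrite /rCG trmx_mul !mulmxA -(mulmxA F^T) -(mulmxA _ _ Q) gQ.
Qed.

Lemma through_C_g_invariant f Q F : through_C g f -> g_orthogonal g Q -> f (Q *m F) = f F.
Proof. by move=> [f' fE] gQ; rewrite !fE rCG_g_orthogonal. Qed.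

Lemma through_C_dF_sym psi F : differentiable psi F -> through_C g psi ->
  (g *m F *m (dF psi F)^T)^T = g *m F *m (dF psi F)^T.
Proof.
move=> dpsi psiC; apply: g_invariant_dF_sym => // Q.
exact: through_C_g_invariant.
Qed.

Lemma PK_balance phi psi : (forall i F, differentiable (psi i) F) ->
  (forall i, through_C g (psi i)) -> balance_ang_mom (PK g phi psi).
Proof.
move=> dpsi psiC; apply: balance_of_sym => F.
rewrite linear_sum mulmx_sumr linear_sum; apply: eq_bigr => i _.
by rewrite linearZ /= -scalemxAr linearZ /= through_C_dF_sym.
Qed.

Lemma scaled_dF_balance (phi psi : 'M[R]_3 -> R) : (forall F, differentiable psi F) ->
  through_C g psi -> balance_ang_mom (fun F => invmx g *m (phi F *: dF psi F)).
Proof.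
move=> dpsi psiC; apply: balance_of_sym => F.
by rewrite linearZ /= -scalemxAr linearZ /= through_C_dF_sym.
Qed.

Lemma g_orthogonalN1 : g_orthogonal g (- 1%:M).
Proof. by rewrite /g_orthogonal [_^T]linearN /= trmx1 mulNmx mul1mx mulmxN mulmx1 opprK. Qed.

Lemma dF_even (psi : 'M[R]_3 -> R) F : (forall X, psi (- X) = psi X) -> differentiable psi F ->
  dF psi (- F) = - dF psi F.
Proof.
move=> psi_even dpsi; apply/matrixP => i j.
by rewrite !mxE derive_even // deriveE // linearN /= -deriveE.
Qed.

Lemma not_objective_even (phi psi : 'M[R]_3 -> R) F :
  (forall X, psi (- X) = psi X) -> differentiable psi F ->
  phi (- F) != phi F -> dF psi F != 0 ->
  ~ objective g (fun F => invmx g *m (phi F *: dF psi F)).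
Proof.
move=> psi_even dpsi phiN dF0 obj; have := obj (- 1%:M) F g_orthogonalN1.
rewrite mulNmx mul1mx dF_even // mulNmx mul1mx => /(congr1 (mulmx g)).
rewrite mulmxN !mulKVmx ?metric_unitmx // => /eqP.
rewrite scalerN eqr_opp -subr_eq0 -scalerBl scaler_eq0 subr_eq0.
by rewrite (negbTE phiN) (negbTE dF0).
Qed.

Definition ericksen_phi (F : 'M[R]_3) : R := if 0 < F 0 0 then 1 else 2.

Definition ericksen_psi (F : 'M[R]_3) : R := rCG g F 0 0.

Lemma ericksen_phi_neq0 F : ericksen_phi F != 0.
Proof. by rewrite /ericksen_phi; case: ifP => _; rewrite ?oner_neq0 ?pnatr_eq0. Qed.

Lemma ericksen_phiN1 : ericksen_phi (- 1%:M) != ericksen_phi 1%:M.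
Proof. by rewrite /ericksen_phi !mxE eqxx /= oppr_gt0 ltr10 ltr01 pnatr_eq1. Qed.

Lemma through_C_ericksen_psi : through_C g ericksen_psi.
Proof. by exists (fun C => C 0 0). Qed.

Lemma differentiable_ericksen_psi F : differentiable ericksen_psi F.
Proof.
have dsum (f : 'I_3 -> 'M[R]_3 -> R) : (forall i, differentiable (f i) F) ->
    differentiable (fun X => \sum_i f i X) F.
  move=> df; have -> : (fun X => \sum_i f i X) = \sum_i f i.
    by apply/funext => X; rewrite fct_sumE.
  exact: differentiable_sum.
have -> : ericksen_psi = fun X => \sum_l (\sum_k X k 0 * g k l) * X l 0.
  apply/funext => X; rewrite /ericksen_psi /rCG mxE; apply: eq_bigr => l _.
  by rewrite mxE; congr (_ * _); apply: eq_bigr => k _; rewrite mxE.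
apply: (dsum) => l; apply: differentiableM; last exact: differentiable_coord.
apply: (dsum) => k; apply: differentiableM; first exact: differentiable_coord.
exact: differentiable_cst.
Qed.

Lemma ericksen_psiZ t F : ericksen_psi (t *: F) = t ^+ 2 * ericksen_psi F.
Proof.
rewrite /ericksen_psi /rCG [_^T]linearZ /= -scalemxAr -!scalemxAl scalerA -expr2.
by rewrite [in LHS]mxE.
Qed.

Lemma ericksen_psi_even X : ericksen_psi (- X) = ericksen_psi X.
Proof.
have -> : - X = - 1%:M *m X by rewrite mulNmx mul1mx.
exact: through_C_g_invariant through_C_ericksen_psi g_orthogonalN1.
Qed.

Lemma dF_ericksen_psi_neq0 : dF ericksen_psi 1%:M != 0.
Proof.
have := diff_homogeneous (differentiable_ericksen_psi 1%:M) (ericksen_psiZ ^~ 1%:M).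
rewrite diff_dF ?mul1mx; last exact: differentiable_ericksen_psi.
apply: contraPneq => ->; rewrite trmx0 mxtrace0 => /esym/eqP.
rewrite mulf_eq0 pnatr_eq0 /= /ericksen_psi /rCG trmx1 mul1mx mulmx1.
by rewrite gt_eqF // metric_diag_gt0.
Qed.

Lemma ericksen_not_objective :
  ~ objective g (fun F => invmx g *m (ericksen_phi F *: dF ericksen_psi F)).
Proof.
apply: (not_objective_even (F := 1%:M)) ericksen_psi_even _ ericksen_phiN1 dF_ericksen_psi_neq0.
exact: differentiable_ericksen_psi.
Qed.
End CauchyElastic.

Theorem mainTheorem2 (R : realType) (g : 'M[R]_3) (hg : is_metric g) :
  (* (i) *)
  (forall phi psi : 'I_3 -> 'M[R]_3 -> R,
     (forall i F, differentiable (psi i) F) ->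
     (forall i, through_C g (phi i)) ->
     (forall i, through_C g (psi i)) ->
     balance_ang_mom (PK g phi psi)) /\
  (* (ii) an Ericksen solid: balanced but not objective *)
  (exists phi1 psi1 : 'M[R]_3 -> R,
     through_C g psi1 /\
     (forall F, differentiable psi1 F) /\
     (forall F, phi1 F != 0) /\
     (exists Q F, g_orthogonal g Q /\ phi1 (Q *m F) <> phi1 F) /\
     balance_ang_mom (fun F => invmx g *m (phi1 F *: dF psi1 F)) /\
     ~ objective g (fun F => invmx g *m (phi1 F *: dF psi1 F))).
Proof.
split=> [phi psi dpsi _ psiC|]; first exact: PK_balance.
exists (@ericksen_phi R), (ericksen_psi g).
split; first exact: through_C_ericksen_psi.
split; first exact: differentiable_ericksen_psi.
split; first exact: ericksen_phi_neq0.
split.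
  exists (- 1%:M), 1%:M; split; first exact: g_orthogonalN1.
  by rewrite mulmx1; apply/eqP; exact: ericksen_phiN1.
split; first exact: scaled_dF_balance (differentiable_ericksen_psi g) (through_C_ericksen_psi g).
exact: ericksen_not_objective.
Qed.
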